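(* Let $\mathsf{SRng}$ be the category of semirings and semiring homomorphisms, and let $S$ be the class of Schreier split epimorphisms in $\mathsf{SRng}$. If $h\colon E\to B$ is a surjective semiring homomorphism, then the change-of-base functor $h^*\colon SPt_B(\mathsf{SRng})\to SPt_E(\mathsf{SRng})$ has a right adjoint.
   Context: A semiring here is a set with a commutative monoid structure $(+,0)$ and an associative (not necessarily unital) multiplication distributing over $+$ on both sides, with $0x=x0=0$. A point in a category is a split epimorphism $f\colon A\to B$ with chosen section $s$ ($fs=1_B$); $Pt_B$ is the category of points over $B$ with morphisms commuting with $f$ and $s$ and identity on $B$; for $h\colon E\to B$, $h^*$ pulls points back along $h$. A split epimorphism $(A,B,f,s)$ of semirings is a Schreier split epimorphism if for every $a\in A$ there is a unique $\alpha\in\mathrm{Ker}(f)=f^{-1}(0)$ with $a=\alpha+sf(a)$. This class $S$ is pullback-stable, and $SPt_B(\mathsf{SRng})$ is the full subcategory of $Pt_B(\mathsf{SRng})$ of points in $S$. *)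

From Stdlib Require Import ProofIrrelevance.
Set Implicit Arguments.

(* A (not necessarily unital) semiring: commutative monoid (+,0),
   associative multiplication distributing on both sides, 0 absorbing. *)
Record SRng := {
  car :> Type;
  sadd : car -> car -> car;
  szero : car;
  smul : car -> car -> car;
  addA : forall x y z, sadd x (sadd y z) = sadd (sadd x y) z;
  addC : forall x y, sadd x y = sadd y x;
  add0l : forall x, sadd szero x = x;
  mulA : forall x y z, smul x (smul y z) = smul (smul x y) z;
  mulDl : forall x y z, smul (sadd x y) z = sadd (smul x z) (smul y z);
  mulDr : forall x y z, smul x (sadd y z) = sadd (smul x y) (smul x z);
  mul0l : forall x, smul szero x = szero;
  mul0r : forall x, smul x szero = szero }.

Arguments sadd {s}. Arguments szero {s}. Arguments smul {s}.

Record SHom (A B : SRng) := {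
  hfun :> A -> B;
  hadd : forall x y, hfun (sadd x y) = sadd (hfun x) (hfun y);
  hzero : hfun szero = szero;
  hmul : forall x y, hfun (smul x y) = smul (hfun x) (hfun y) }.

Definition surjective (A B : SRng) (h : SHom A B) : Prop :=
  forall b : B, exists a : A, h a = b.

Record Point (B : SRng) := {
  pcar : SRng;
  pf : SHom pcar B;
  ps : SHom B pcar;
  psec : forall b, pf (ps b) = b }.

Definition Schreier (B : SRng) (P : Point B) : Prop :=
  forall a : pcar P, exists! al : pcar P,
    pf P al = szero /\ a = sadd al (ps P (pf P a)).

Record PtMor (B : SRng) (P Q : Point B) := {
  mfun :> SHom (pcar P) (pcar Q);
  mf : forall a, pf Q (mfun a) = pf P a;
  ms : forall b, mfun (ps P b) = ps Q b }.

Section Pullback.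
Variables (E B : SRng) (h : SHom E B) (P : Point B).

Definition pbT := { p : pcar P * E | pf P (fst p) = h (snd p) }.

Lemma pb_eq (x y : pbT) : proj1_sig x = proj1_sig y -> x = y.
Proof.
destruct x as [x Hx], y as [y Hy]; simpl; intros ->.
f_equal; apply proof_irrelevance.
Qed.

Definition pb_add (x y : pbT) : pbT.
refine (exist _ (sadd (fst (proj1_sig x)) (fst (proj1_sig y)),
                 sadd (snd (proj1_sig x)) (snd (proj1_sig y))) _).
destruct x as [x Hx], y as [y Hy]; simpl.
rewrite hadd, hadd, Hx, Hy; reflexivity.
Defined.

Definition pb_zero : pbT.
refine (exist _ (szero, szero) _).
simpl; rewrite hzero, hzero; reflexivity.
Defined.

Definition pb_mul (x y : pbT) : pbT.
refine (exist _ (smul (fst (proj1_sig x)) (fst (proj1_sig y)),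
                 smul (snd (proj1_sig x)) (snd (proj1_sig y))) _).
destruct x as [x Hx], y as [y Hy]; simpl.
rewrite hmul, hmul, Hx, Hy; reflexivity.
Defined.

Ltac pbt := intros; repeat match goal with x : pbT |- _ => destruct x as [[? ?] ?] end; apply pb_eq; simpl; apply (f_equal2 pair).

Definition pbS : SRng.
refine (@Build_SRng pbT pb_add pb_zero pb_mul _ _ _ _ _ _ _ _);
  pbt; first [apply addA | apply addC | apply add0l | apply mulA
             | apply mulDl | apply mulDr | apply mul0l | apply mul0r].
Defined.

Definition pb_f : SHom pbS E.
refine (@Build_SHom pbS E (fun x : pbT => snd (proj1_sig x)) _ _ _);
  reflexivity.
Defined.

Definition pb_s_fun (e : E) : pbT.
refine (exist _ (ps P (h e), e) _).
simpl; apply psec.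
Defined.

Definition pb_s : SHom E pbS.
refine (@Build_SHom E pbS pb_s_fun _ _ _); intros; apply pb_eq; simpl;
  apply (f_equal2 pair); try reflexivity;
  first [rewrite hadd, hadd | rewrite hzero, hzero | rewrite hmul, hmul];
  reflexivity.
Defined.

Definition pb : Point E.
refine (@Build_Point E pbS pb_f pb_s _).
reflexivity.
Defined.

End Pullback.

Section PullbackMor.
Variables (E B : SRng) (h : SHom E B) (P P' : Point B) (g : PtMor P P').

Definition pb_mor_fun (x : pbT h P) : pbT h P'.
refine (exist _ (g (fst (proj1_sig x)), snd (proj1_sig x)) _).
destruct x as [x Hx]; simpl.
rewrite mf; exact Hx.
Defined.

Definition pb_hom : SHom (pbS h P) (pbS h P').
refine (@Build_SHom (pbS h P) (pbS h P') pb_mor_fun _ _ _);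
  intros; apply pb_eq; simpl; apply (f_equal2 pair); try reflexivity;
  first [apply hadd | apply hzero | apply hmul].
Defined.

Definition pb_mor : PtMor (pb h P) (pb h P').
refine (@Build_PtMor E (pb h P) (pb h P') pb_hom _ _).
- reflexivity.
- intros; apply pb_eq; simpl; apply (f_equal2 pair); [apply ms | reflexivity].
Defined.

End PullbackMor.

(* The functor h^* : SPt_B -> SPt_E has a right adjoint, expressed via the
   equivalent pointwise characterisation by universal arrows (couniversal
   arrows from h^* to each object Q of SPt_E; Mac Lane IV.1 Thm 2). *)
Definition SPt_pullback_has_right_adjoint (E B : SRng) (h : SHom E B) : Prop :=
  forall Q : Point E, Schreier Q ->
  exists (R : Point B) (eps : PtMor (pb h R) Q),
    Schreier R /\
    forall P : Point B, Schreier P ->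
    forall F : PtMor (pb h P) Q,
    exists g : PtMor P R,
      (forall x, eps (pb_mor h g x) = F x) /\
      (forall g' : PtMor P R,
         (forall x, eps (pb_mor h g' x) = F x) -> forall a, g' a = g a).

(* Write a Schreier point Q = (D, p, t) over E as D = K + t(E), K = ker p, so
   that an element d is the pair (k, e) with d = k + t(e).  The right adjoint
   sends Q to the point over B whose elements are the pairs (k, b) with k in K,
   b in B, and k "h-invariant": t(e) k and k t(e) depend on e only through h(e).
   Invariance is exactly what makes the product
   (k, b)(k', b') = (k k' + k t(e') + t(e) k', b b')  (h e = b, h e' = b')
   well defined.  We realise this semiring inside D by the normal forms
   k + t(sg b), for a section sg of the surjection h.  A morphism
   h^* P -> Q is determined by its values on ker(P -> B) and on t(E), and the
   first ones are automatically h-invariant, which gives the universal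
   property. *)
From Stdlib Require Import IndefiniteDescription ProofIrrelevance.
Set Implicit Arguments.

Lemma add0r {S : SRng} (a : S) : sadd a szero = a.
Proof. rewrite addC; apply add0l. Qed.

Lemma addACA {S : SRng} (a b c d : S) :
  sadd (sadd a b) (sadd c d) = sadd (sadd a c) (sadd b d).
Proof. rewrite !addA; f_equal; rewrite <- !addA; f_equal; apply addC. Qed.

Lemma mulDD {S : SRng} (a b c d : S) :
  smul (sadd a c) (sadd b d)
  = sadd (sadd (sadd (smul a b) (smul a d)) (smul c b)) (smul c d).
Proof. rewrite mulDl, !mulDr, addA; reflexivity. Qed.

Section SchreierKernel.
Variables (B : SRng) (P : Point B) (HP : Schreier P).
Local Notation f := (pf P).
Local Notation s := (ps P).

Definition kerproj (a : pcar P) : pcar P :=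
  proj1_sig (constructive_indefinite_description _ (HP a)).

Lemma kerproj_spec a : f (kerproj a) = szero /\ a = sadd (kerproj a) (s (f a)).
Proof.
unfold kerproj; destruct (constructive_indefinite_description _ (HP a)) as [k [Hk Hu]].
exact Hk.
Qed.

Lemma kerproj_ker a : f (kerproj a) = szero.
Proof. apply kerproj_spec. Qed.

Lemma kerproj_dec a : a = sadd (kerproj a) (s (f a)).
Proof. apply kerproj_spec. Qed.

Lemma kerproj_sum k b : f k = szero -> kerproj (sadd k (s b)) = k.
Proof.
intros Hk; unfold kerproj.
destruct (constructive_indefinite_description _ (HP (sadd k (s b)))) as [k' [Hk' Hu]].
simpl; apply Hu; split; [exact Hk |].
rewrite (hadd f), Hk, psec, add0l; reflexivity.
Qed.

Lemma kerproj_id k : f k = szero -> kerproj k = k.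
Proof.
intros Hk; rewrite <- (add0r k) at 1; rewrite <- (hzero s); apply kerproj_sum, Hk.
Qed.

Lemma kerproj_s b : kerproj (s b) = szero.
Proof. rewrite <- (add0l _ (s b)) at 1; apply kerproj_sum, hzero. Qed.

Lemma kerproj0 : kerproj szero = szero.
Proof. apply kerproj_id, hzero. Qed.

Lemma kerprojD x y : kerproj (sadd x y) = sadd (kerproj x) (kerproj y).
Proof.
rewrite (kerproj_dec x) at 1; rewrite (kerproj_dec y) at 1.
rewrite addACA, <- (hadd s); apply kerproj_sum.
rewrite (hadd f), !kerproj_ker, add0l; reflexivity.
Qed.

Lemma kerprojM x y :
  kerproj (smul x y) = sadd (sadd (smul (kerproj x) (kerproj y))
                                  (smul (kerproj x) (s (f y))))
                            (smul (s (f x)) (kerproj y)).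
Proof.
rewrite (kerproj_dec x) at 1; rewrite (kerproj_dec y) at 1.
rewrite mulDD, <- (hmul s); apply kerproj_sum.
rewrite !(hadd f), !(hmul f), !kerproj_ker, ?mul0l, ?mul0r, ?add0l; reflexivity.
Qed.

End SchreierKernel.

(* The quotient of the subsemiring [adm] by the congruence [nf x = nf y],
   represented by the fixed points of [nf]. *)
Section NormalForms.
Variables (S : SRng) (adm : S -> Prop) (nf : S -> S).
Hypotheses
  (adm0 : adm szero)
  (admD : forall x y, adm x -> adm y -> adm (sadd x y))
  (admM : forall x y, adm x -> adm y -> adm (smul x y))
  (adm_nf : forall x, adm x -> adm (nf x))
  (nf_addl : forall x y, nf (sadd (nf x) y) = nf (sadd x y))
  (nf_mull : forall x y, adm y -> nf (smul (nf x) y) = nf (smul x y))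
  (nf_mulr : forall x y, adm x -> nf (smul x (nf y)) = nf (smul x y)).

Lemma nf_addr x y : nf (sadd x (nf y)) = nf (sadd x y).
Proof. rewrite addC, nf_addl, addC; reflexivity. Qed.

Lemma nf_idem x : nf (nf x) = nf x.
Proof.
transitivity (nf (sadd (nf x) szero)); [rewrite add0r; reflexivity |].
rewrite nf_addl, add0r; reflexivity.
Qed.

Definition nfT := { x : S | adm x /\ nf x = x }.

Lemma nfT_eq (x y : nfT) : proj1_sig x = proj1_sig y -> x = y.
Proof.
destruct x as [x Hx], y as [y Hy]; simpl; intros ->.
f_equal; apply proof_irrelevance.
Qed.

Lemma nfT_adm (x : nfT) : adm (proj1_sig x).
Proof. exact (proj1 (proj2_sig x)). Qed.

Lemma nfT_nf (x : nfT) : nf (proj1_sig x) = proj1_sig x.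
Proof. exact (proj2 (proj2_sig x)). Qed.

Definition nf_of (x : S) (Hx : adm x) : nfT :=
  exist _ (nf x) (conj (adm_nf Hx) (nf_idem x)).

Definition nf_add (x y : nfT) : nfT := nf_of (admD (nfT_adm x) (nfT_adm y)).
Definition nf_mul (x y : nfT) : nfT := nf_of (admM (nfT_adm x) (nfT_adm y)).

Definition nfS : SRng.
refine (@Build_SRng nfT nf_add (nf_of adm0) nf_mul _ _ _ _ _ _ _ _);
  intros; apply nfT_eq; simpl.
- rewrite nf_addl, nf_addr, addA; reflexivity.
- rewrite addC; reflexivity.
- rewrite nf_addl, add0l, nfT_nf; reflexivity.
- rewrite nf_mull, nf_mulr, mulA; auto using nfT_adm.
- rewrite nf_mull, mulDl, nf_addl, nf_addr; auto using nfT_adm.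
- rewrite nf_mulr, mulDr, nf_addl, nf_addr; auto using nfT_adm.
- rewrite nf_mull, mul0l; auto using nfT_adm.
- rewrite nf_mulr, mul0r; auto using nfT_adm.
Defined.

End NormalForms.

Section Invariance.
Variables (E B : SRng) (h : SHom E B) (Q : Point E).
Local Notation t := (ps Q).

Definition h_invariant (a : pcar Q) : Prop :=
  forall e e', h e = h e' ->
    smul (t e) a = smul (t e') a /\ smul a (t e) = smul a (t e').

Lemma h_invariant0 : h_invariant szero.
Proof. intros e e' _; rewrite !mul0r, !mul0l; split; reflexivity. Qed.

Lemma h_invariantD a b : h_invariant a -> h_invariant b -> h_invariant (sadd a b).
Proof.
intros Ha Hb e e' He; destruct (Ha _ _ He), (Hb _ _ He).
rewrite !mulDr, !mulDl; split; congruence.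
Qed.

Lemma h_invariantM a b : h_invariant a -> h_invariant b -> h_invariant (smul a b).
Proof.
intros Ha Hb e e' He; destruct (Ha _ _ He) as [Hal _], (Hb _ _ He) as [_ Hbr].
rewrite !mulA, Hal, <- !mulA, Hbr; split; reflexivity.
Qed.

Lemma h_invariantMs a c : h_invariant a -> h_invariant (smul a (t c)).
Proof.
intros Ha e e' He.
assert (Hce : h (smul c e) = h (smul c e')) by (rewrite !(hmul h), He; reflexivity).
destruct (Ha _ _ He) as [Hal _], (Ha _ _ Hce) as [_ Har].
rewrite !mulA, Hal, <- !mulA, <- !(hmul t), Har; split; reflexivity.
Qed.

Lemma h_invariant_sM a c : h_invariant a -> h_invariant (smul (t c) a).
Proof.
intros Ha e e' He.
assert (Hec : h (smul e c) = h (smul e' c)) by (rewrite !(hmul h), He; reflexivity).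
destruct (Ha _ _ Hec) as [Hal _], (Ha _ _ He) as [_ Har].
rewrite !mulA, <- !(hmul t), Hal, <- !mulA, Har; split; reflexivity.
Qed.

Variable HQ : Schreier Q.
Local Notation kerQ := (kerproj HQ).

Definition admissible (d : pcar Q) : Prop := h_invariant (kerQ d).

Lemma admissible0 : admissible szero.
Proof. unfold admissible; rewrite kerproj0; apply h_invariant0. Qed.

Lemma admissible_s e : admissible (t e).
Proof. unfold admissible; rewrite kerproj_s; apply h_invariant0. Qed.

Lemma admissible_ker d : admissible d -> admissible (kerQ d).
Proof. unfold admissible; rewrite (kerproj_id HQ _ (kerproj_ker HQ d)); auto. Qed.

Lemma admissibleD x y : admissible x -> admissible y -> admissible (sadd x y).
Proof. unfold admissible; rewrite kerprojD; apply h_invariantD. Qed.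

Lemma admissibleM x y : admissible x -> admissible y -> admissible (smul x y).
Proof.
unfold admissible; intros Hx Hy; rewrite kerprojM.
auto using h_invariantD, h_invariantM, h_invariantMs, h_invariant_sM.
Qed.

End Invariance.

Section RightAdjoint.
Variables (E B : SRng) (h : SHom E B) (sg : B -> E) (sgK : forall b, h (sg b) = b).
Variables (Q : Point E) (HQ : Schreier Q).
Local Notation p := (pf Q).
Local Notation t := (ps Q).
Local Notation kerQ := (kerproj HQ).
Local Notation adm := (admissible h HQ).

Definition nf (d : pcar Q) : pcar Q := sadd (kerQ d) (t (sg (h (p d)))).

Lemma kerproj_nf d : kerQ (nf d) = kerQ d.
Proof. apply kerproj_sum, kerproj_ker. Qed.

Lemma p_nf d : p (nf d) = sg (h (p d)).
Proof. unfold nf; rewrite (hadd p), kerproj_ker, add0l, psec; reflexivity. Qed.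

Lemma hp_nf d : h (p (nf d)) = h (p d).
Proof. rewrite p_nf, sgK; reflexivity. Qed.

Lemma nf_eq x y : kerQ x = kerQ y -> h (p x) = h (p y) -> nf x = nf y.
Proof. unfold nf; intros -> ->; reflexivity. Qed.

Lemma nf_s_eq e e' : h e = h e' -> nf (t e) = nf (t e').
Proof. intros He; apply nf_eq; rewrite ?kerproj_s, ?psec; auto. Qed.

Lemma adm_nf d : adm d -> adm (nf d).
Proof. unfold admissible; rewrite kerproj_nf; auto. Qed.

Lemma nf_addl x y : nf (sadd (nf x) y) = nf (sadd x y).
Proof.
apply nf_eq.
- rewrite !kerprojD, kerproj_nf; reflexivity.
- rewrite !(hadd p), !(hadd h), hp_nf; reflexivity.
Qed.

Lemma nf_mull x y : adm y -> nf (smul (nf x) y) = nf (smul x y).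
Proof.
intros Hy; apply nf_eq.
- rewrite !kerprojM, kerproj_nf, p_nf; f_equal; apply (Hy _ _ (sgK _)).
- rewrite !(hmul p), !(hmul h), hp_nf; reflexivity.
Qed.

Lemma nf_mulr x y : adm x -> nf (smul x (nf y)) = nf (smul x y).
Proof.
intros Hx; apply nf_eq.
- rewrite !kerprojM, kerproj_nf, p_nf; do 2 f_equal; apply (Hx _ _ (sgK _)).
- rewrite !(hmul p), !(hmul h), hp_nf; reflexivity.
Qed.

Definition R : SRng :=
  nfS _ adm nf (admissible0 h HQ) (@admissibleD _ _ h _ HQ) (@admissibleM _ _ h _ HQ)
      adm_nf nf_addl nf_mull nf_mulr.

Definition to_R (d : pcar Q) (Hd : adm d) : R := nf_of _ _ _ adm_nf nf_addl d Hd.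

Definition R_f : SHom R B.
refine (@Build_SHom R B (fun x => h (p (proj1_sig x))) _ _ _); intros; simpl;
  rewrite hp_nf; [rewrite (hadd p), (hadd h) | rewrite (hzero p), (hzero h)
                 | rewrite (hmul p), (hmul h)]; reflexivity.
Defined.

Definition R_s : SHom B R.
refine (@Build_SHom B R (fun b => to_R (admissible_s h HQ (sg b))) _ _ _);
  intros; apply nfT_eq; simpl.
- rewrite nf_addl, (nf_addr _ _ nf_addl), <- (hadd t).
  apply nf_s_eq; rewrite !(hadd h), !sgK; reflexivity.
- rewrite <- (hzero t); apply nf_s_eq; rewrite sgK, (hzero h); reflexivity.
- rewrite nf_mull, nf_mulr, <- (hmul t)
    by first [apply admissible_s | apply adm_nf, admissible_s].
  apply nf_s_eq; rewrite !(hmul h), !sgK; reflexivity.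
Defined.

Definition Rpt : Point B.
refine (@Build_Point B R R_f R_s _).
intros b; simpl; rewrite hp_nf, psec, sgK; reflexivity.
Defined.

Lemma R_eq (x y : R) :
  kerQ (proj1_sig x) = kerQ (proj1_sig y) -> R_f x = R_f y -> x = y.
Proof.
intros Hk Hf; apply nfT_eq; rewrite <- (nfT_nf x), <- (nfT_nf y).
apply nf_eq; assumption.
Qed.

Lemma kerproj_R_s b : kerQ (proj1_sig (R_s b)) = szero.
Proof. simpl; rewrite kerproj_nf; apply kerproj_s. Qed.

Lemma kerproj_R_add (x y : R) :
  kerQ (proj1_sig (sadd x y)) = sadd (kerQ (proj1_sig x)) (kerQ (proj1_sig y)).
Proof. simpl; rewrite kerproj_nf; apply kerprojD. Qed.

Lemma Rpt_Schreier : Schreier Rpt.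
Proof.
intros a; exists (to_R (admissible_ker (nfT_adm a))); split; [split |].
- simpl; rewrite hp_nf, kerproj_ker, (hzero h); reflexivity.
- apply R_eq.
  + rewrite kerproj_R_add, kerproj_R_s, add0r; simpl.
    rewrite kerproj_nf, (kerproj_id HQ _ (kerproj_ker HQ _)); reflexivity.
  + rewrite (hadd R_f), (psec Rpt); simpl.
    rewrite hp_nf, kerproj_ker, (hzero h), add0l; reflexivity.
- intros k [Hk Ha]; apply R_eq.
  + simpl; rewrite kerproj_nf, (kerproj_id HQ _ (kerproj_ker HQ _)), Ha.
    rewrite kerproj_R_add, kerproj_R_s, add0r; reflexivity.
  + simpl in Hk |- *; rewrite Hk, hp_nf, kerproj_ker, (hzero h); reflexivity.
Qed.

Definition counit_fun (x : pbT h Rpt) : pcar Q :=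
  sadd (kerQ (proj1_sig (fst (proj1_sig x)))) (t (snd (proj1_sig x))).

(* The pullback condition h e = R_f x is what lets invariance of the kernel
   part of x turn [t (p x)] into [t e]. *)
Definition counit_hom : SHom (pbS h Rpt) (pcar Q).
refine (@Build_SHom (pbS h Rpt) (pcar Q) counit_fun _ _ _).
- intros [[x e] Hx] [[y e'] Hy]; unfold counit_fun; simpl.
  rewrite kerproj_nf, kerprojD, (hadd t), addACA; reflexivity.
- unfold counit_fun; simpl; rewrite kerproj_nf, kerproj0, (hzero t), add0l; reflexivity.
- intros [[x e] Hx] [[y e'] Hy]; unfold counit_fun; simpl in *.
  rewrite kerproj_nf, kerprojM, mulDD, (hmul t).
  destruct (nfT_adm x _ _ Hy) as [_ Hxr], (nfT_adm y _ _ Hx) as [Hyl _].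
  rewrite Hxr, Hyl; reflexivity.
Defined.

Definition counit : PtMor (pb h Rpt) Q.
refine (@Build_PtMor E (pb h Rpt) Q counit_hom _ _).
- intros x; simpl; unfold counit_fun.
  rewrite (hadd p), kerproj_ker, add0l, psec; reflexivity.
- intros e; simpl; unfold counit_fun; simpl.
  rewrite kerproj_nf, kerproj_s, add0l; reflexivity.
Defined.

Section Universal.
Variables (P : Point B) (HP : Schreier P) (F : PtMor (pb h P) Q).
Local Notation f := (pf P).
Local Notation kerP := (kerproj HP).

Definition pb_pair (a : pcar P) (e : E) (H : f a = h e) : pbT h P := exist _ (a, e) H.

Lemma f_kerproj a : f (kerP a) = h szero.
Proof. rewrite kerproj_ker, (hzero h); reflexivity. Qed.

Definition kerF (a : pcar P) : pcar Q := F (pb_pair (kerP a) szero (f_kerproj a)).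

Lemma p_kerF a : p (kerF a) = szero.
Proof. unfold kerF; rewrite (mf F); reflexivity. Qed.

Lemma F_dec (x : pbT h P) :
  F x = sadd (kerF (fst (proj1_sig x))) (t (snd (proj1_sig x))).
Proof.
destruct x as [[a e] H]; simpl in *.
transitivity (F (sadd (pb_pair (kerP a) szero (f_kerproj a) : pbS h P) (pb_s h P e))).
- f_equal; apply pb_eq; simpl.
  rewrite add0l, <- H, <- (kerproj_dec HP); reflexivity.
- rewrite (hadd (mfun F)); f_equal; apply (ms F).
Qed.

Lemma kerproj_F x : kerQ (F x) = kerF (fst (proj1_sig x)).
Proof. rewrite F_dec; apply kerproj_sum, p_kerF. Qed.

(* In h^* P, multiplying (k, 0) by the image (s (h e), e) of e only sees h e. *)
Lemma h_invariant_kerF a : h_invariant h Q (kerF a).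
Proof.
intros e e' He; unfold kerF; rewrite <- !(ms F), <- !(hmul (mfun F)).
split; f_equal; apply pb_eq; simpl; rewrite He, ?mul0l, ?mul0r; reflexivity.
Qed.

Lemma admissible_F x : adm (F x).
Proof. unfold admissible; rewrite kerproj_F; apply h_invariant_kerF. Qed.

Lemma nf_F (x y : pbT h P) : fst (proj1_sig x) = fst (proj1_sig y) ->
  h (snd (proj1_sig x)) = h (snd (proj1_sig y)) -> nf (F x) = nf (F y).
Proof.
intros H1 H2; apply nf_eq.
- rewrite !kerproj_F, H1; reflexivity.
- rewrite !(mf F); exact H2.
Qed.

Definition pb_lift (a : pcar P) : pbT h P := pb_pair a (sg (f a)) (eq_sym (sgK (f a))).

Definition transpose_hom : SHom (pcar P) R.
refine (@Build_SHom (pcar P) R (fun a => to_R (admissible_F (pb_lift a))) _ _ _);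
  intros; apply nfT_eq; simpl.
- rewrite nf_addl, (nf_addr _ _ nf_addl), <- (hadd (mfun F)).
  apply nf_F; simpl; [reflexivity |].
  rewrite (hadd h), !sgK, (hadd f); reflexivity.
- rewrite <- (hzero (mfun F)); apply nf_F; simpl; [reflexivity |].
  rewrite sgK, (hzero f), (hzero h); reflexivity.
- rewrite nf_mull, nf_mulr, <- (hmul (mfun F)) by first
    [apply admissible_F | apply adm_nf, admissible_F].
  apply nf_F; simpl; [reflexivity |].
  rewrite (hmul h), !sgK, (hmul f); reflexivity.
Defined.

Definition transpose : PtMor P Rpt.
refine (@Build_PtMor B P Rpt transpose_hom _ _).
- intros a; simpl; rewrite hp_nf, (mf F); apply sgK.
- intros b; apply nfT_eq; simpl; rewrite <- (ms F (sg b)).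
  apply nf_F; simpl; [rewrite sgK; reflexivity |].
  rewrite psec, !sgK; reflexivity.
Defined.

Lemma counit_transpose x : counit (pb_mor h transpose x) = F x.
Proof.
destruct x as [[a e] H]; simpl; unfold counit_fun; simpl.
rewrite kerproj_nf, kerproj_F, F_dec; reflexivity.
Qed.

Lemma transpose_unique (g : PtMor P Rpt) :
  (forall x, counit (pb_mor h g x) = F x) -> forall a, g a = transpose a.
Proof.
intros Hg a; apply R_eq.
- specialize (Hg (pb_lift a)); simpl in Hg |- *; unfold counit_fun in Hg; simpl in Hg.
  rewrite kerproj_nf, <- Hg, kerproj_sum; auto using kerproj_ker.
- rewrite (mf g), (mf transpose); reflexivity.
Qed.

End Universal.
End RightAdjoint.

Theorem mainTheorem3 (E B : SRng) (h : SHom E B) :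
  surjective h -> SPt_pullback_has_right_adjoint h.
Proof.
intros hs Q HQ.
destruct (functional_choice (fun b e => h e = b) hs) as [sg sgK].
exists (Rpt h sg sgK HQ), (counit h sg sgK HQ); split; [apply Rpt_Schreier |].
intros P HP F; exists (transpose sg sgK HQ HP F); split.
- apply counit_transpose.
- apply transpose_unique.
Qed.
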